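(* Let $N\ge 4$ and define the holomorphic map $\Phi_N\colon \mathbb{C}^N\to \mathrm{SL}_2(\mathbb{C})$ by $$\Phi_N(z_1,\dots,z_N)=M_1(z_1)M_2(z_2)\cdots M_N(z_N),$$ where for $t\in\mathbb{C}$ we set $M_j(t)=\begin{pmatrix}1&0\\ t&1\end{pmatrix}$ if $j$ is odd and $M_j(t)=\begin{pmatrix}1&t\\ 0&1\end{pmatrix}$ if $j$ is even. Then $\Phi_N$ is a submersion at a point $z\in\mathbb{C}^N$ if and only if $z\notin\{(z_1,0,\dots,0,z_N): z_1,z_N\in\mathbb{C}\}$, i.e. if and only if $z_i\neq 0$ for some $2\le i\le N-1$. *)

From HB Require Import structures.
From mathcomp Require Import all_boot all_order all_algebra.
From mathcomp Require Import complex.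
From mathcomp Require Import reals.
Set Implicit Arguments. Unset Strict Implicit. Unset Printing Implicit Defensive.
Import Order.TTheory GRing.Theory Num.Theory.
Local Open Scope ring_scope.

Definition Cplx (R : realType) := R[i].

Section Defs.
Variable S : comNzRingType.

Definition Mj (j : nat) (t : S) : 'M[S]_2 :=
  \matrix_(a < 2, b < 2)
    if a == b then 1
    else if odd j then (if (a == 1 :> nat) && (b == 0 :> nat) then t else 0)
    else (if (a == 0 :> nat) && (b == 1 :> nat) then t else 0).

(* Phi_N(z_1,...,z_N) = M_1(z_1) M_2(z_2) ... M_N(z_N); z_{i+1} is stored at index i *)
Definition PhiN (N : nat) (z : 'I_N -> S) : 'M[S]_2 :=
  \prod_(i < N) Mj i.+1 (z i).

End Defs.

Section Diff.
Variable C : fieldType.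

(* Differential of the polynomial map PhiN at z applied to the tangent vector v:
   d/dt Phi_N(z + t v) at t = 0 (exact derivative of the polynomial map). *)
Definition dPhiN (N : nat) (z v : 'rV[C]_N) : 'M[C]_2 :=
  map_mx (fun p : {poly C} => p^`().[0])
    (PhiN (fun i : 'I_N => (z 0 i)%:P + v 0 i *: 'X)).

(* Tangent space of SL_2(C) at A: kernel of the differential of det at A,
   i.e. { X | d/dt det(A + t X) at t = 0 equals 0 }. *)
Definition tangent_SL2 (A : 'M[C]_2) : pred 'M[C]_2 :=
  fun X => (\det (map_mx polyC A + 'X *: map_mx polyC X))^`().[0] == 0.

Definition PhiN_submersion_at (N : nat) (z : 'rV[C]_N) : Prop :=
  forall Y : 'M[C]_2, tangent_SL2 (PhiN (fun i : 'I_N => z 0 i)) Y ->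
    exists v : 'rV[C]_N, dPhiN z v = Y.

End Diff.

From HB Require Import structures.
From mathcomp Require Import all_boot all_order all_algebra.
From mathcomp Require Import complex.
From mathcomp Require Import reals.
From mathcomp Require Import ring zify.
Set Implicit Arguments. Unset Strict Implicit. Unset Printing Implicit Defensive.
Import Order.TTheory GRing.Theory Num.Theory.
Local Open Scope ring_scope.

(* The partial derivative of Phi_N along the i-th coordinate is Phi_N(z) with the factor
   M_i(z_i) replaced by its derivative E_i, a nilpotent matrix that M_i absorbs on either
   side.  Multiplying by matrices of determinant one preserves the tangent condition of SL_2,
   so around a middle coordinate z_i <> 0 the outer factors can be stripped off: the
   directions i-1, i, i+1 then contribute E_{i-1} M_i(z_i), E_i and M_i(z_i) E_{i-1} (note
   E_{i+1} = E_{i-1}), which span the tangent space of SL_2 at M_i(z_i).  If all middle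
   coordinates vanish, Phi_N(z) = M_1(z_1) M_N(z_N) and every partial derivative is
   M_1(z_1) E_i M_N(z_N) with E_i off-diagonal, so the tangent vector
   M_1(z_1) diag(1,-1) M_N(z_N) is not in the image of the differential. *)

Lemma ord2P (i : 'I_2) : i = 0 \/ i = 1.
Proof. by case: i => [[|[|//]]] lti; [left|right]; apply/val_inj. Qed.

Lemma det_mx2 (R : comNzRingType) (A : 'M[R]_2) :
  \det A = A 0 0 * A 1 1 - A 0 1 * A 1 0.
Proof.
rewrite (expand_det_row _ 0) !big_ord_recl big_ord0 /cofactor !det_mx11 !mxE.
have -> : lift 0 0 = 1 :> 'I_2 by apply/val_inj.
have -> : lift 1 0 = 0 :> 'I_2 by apply/val_inj.
by rewrite /= addr0 expr0 expr1 mul1r; ring.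
Qed.

Section Unipotent.
Variable R : comNzRingType.

Definition dMj (j : nat) : 'M[R]_2 :=
  \matrix_(a < 2, b < 2)
    if a == b then 0
    else if odd j then (if (a == 1 :> nat) && (b == 0 :> nat) then 1 else 0)
    else (if (a == 0 :> nat) && (b == 1 :> nat) then 1 else 0).

Local Ltac entrywise :=
  apply/matrixP => [[[|[|//]] ?] [[|[|//]] ?]];
  rewrite ?mxE ?big_ord_recl ?big_ord0 ?mxE /=.

Lemma Mj0 j : Mj j (0 : R) = 1.
Proof. by entrywise; case: (odd j). Qed.

Lemma MjD j (s t : R) : Mj j s * Mj j t = Mj j (s + t).
Proof. by entrywise; case: (odd j) => /=; ring. Qed.

Lemma MjNK j (t : R) : Mj j (- t) * Mj j t = 1.
Proof. by rewrite MjD addNr Mj0. Qed.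

Lemma MjKN j (t : R) : Mj j t * Mj j (- t) = 1.
Proof. by rewrite MjD addrN Mj0. Qed.

Lemma Mj_dMj j (t : R) : Mj j t * dMj j = dMj j.
Proof. by entrywise; case: (odd j) => /=; ring. Qed.

Lemma dMj_Mj j (t : R) : dMj j * Mj j t = dMj j.
Proof. by entrywise; case: (odd j) => /=; ring. Qed.

Lemma dMjSS j : dMj j.+2 = dMj j.
Proof. by rewrite /dMj /= negbK. Qed.

Lemma dMj00 j : dMj j 0 0 = 0.
Proof. by rewrite mxE. Qed.

Lemma det_Mj j (t : R) : \det (Mj j t) = 1.
Proof. by rewrite det_mx2 !mxE /=; case: (odd j) => /=; ring. Qed.

Lemma det_prod_Mj (f : nat -> R) m n :
  \det (\prod_(m <= j < n) Mj j.+1 (f j)) = 1.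
Proof.
apply: (big_ind (fun M : 'M[R]_2 => \det M = 1)); first by rewrite det1.
  by move=> A B dA dB; rewrite -mulmxE det_mulmx dA dB mulr1.
by move=> i _; rewrite det_Mj.
Qed.

End Unipotent.

Lemma unit_prod_Mj (R : comUnitRingType) (f : nat -> R) m n :
  (\prod_(m <= j < n) Mj j.+1 (f j)) \is a GRing.unit.
Proof. by rewrite unitmxE det_prod_Mj unitr1. Qed.

Section ValueAndDerivativeAt0.
Variables (R : comNzRingType) (n : nat).

Definition mx_at0 (A : 'M[{poly R}]_n) : 'M[R]_n := map_mx (fun p => p.[0]) A.
Definition mx_deriv0 (A : 'M[{poly R}]_n) : 'M[R]_n :=
  map_mx (fun p => p^`().[0]) A.

Lemma mx_at0M A B : mx_at0 (A * B) = mx_at0 A * mx_at0 B.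
Proof.
apply/matrixP=> i j; rewrite !mxE horner_sum; apply: eq_bigr => k _.
by rewrite !mxE hornerM.
Qed.

Lemma mx_deriv0M A B :
  mx_deriv0 (A * B) = mx_deriv0 A * mx_at0 B + mx_at0 A * mx_deriv0 B.
Proof.
apply/matrixP=> i j; rewrite !mxE raddf_sum horner_sum -big_split /=.
by apply: eq_bigr => k _; rewrite !mxE derivM hornerD !hornerM.
Qed.

Lemma mx_at01 : mx_at0 1 = 1.
Proof. by apply/matrixP=> i j; rewrite !mxE; case: (i == j); rewrite hornerE. Qed.

Lemma mx_deriv01 : mx_deriv0 1 = 0.
Proof.
by apply/matrixP=> i j; rewrite !mxE; case: (i == j); rewrite ?derivC hornerE.
Qed.

Lemma mx_at0_prod (G : nat -> 'M[{poly R}]_n) m k :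
  mx_at0 (\prod_(m <= i < k) G i) = \prod_(m <= i < k) mx_at0 (G i).
Proof.
elim: k => [|k IHk]; first by rewrite !big_geq // mx_at01.
have [lemk|ltkm] := leqP m k; first by rewrite !big_nat_recr //= mx_at0M IHk.
by rewrite !big_geq // mx_at01.
Qed.

Lemma mx_deriv0_prod (G : nat -> 'M[{poly R}]_n) k :
  mx_deriv0 (\prod_(0 <= i < k) G i) =
  \sum_(0 <= i < k) (\prod_(0 <= j < i) mx_at0 (G j)) * mx_deriv0 (G i) *
      \prod_(i.+1 <= j < k) mx_at0 (G j).
Proof.
elim: k => [|k IHk]; first by rewrite !big_geq // mx_deriv01.
rewrite big_nat_recr // mx_deriv0M IHk mx_at0_prod [in RHS]big_nat_recr //=.
rewrite [\prod_(k.+1 <= j < k.+1) _]big_geq // mulr1; congr (_ + _).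
rewrite mulr_suml; apply: eq_big_nat => i /andP[_ ltik].
by rewrite (big_nat_recr k i.+1 _ ltik) /= !mulrA.
Qed.

End ValueAndDerivativeAt0.

Lemma mx_at0_Mj (R : comNzRingType) j (c w : R) :
  mx_at0 (Mj j (c%:P + w *: 'X)) = Mj j c.
Proof.
by apply/matrixP => a b; rewrite !mxE; repeat case: ifP => _; rewrite ?hornerE.
Qed.

Lemma mx_deriv0_Mj (R : comNzRingType) j (c w : R) :
  mx_deriv0 (Mj j (c%:P + w *: 'X)) = w *: dMj R j.
Proof.
apply/matrixP => a b; rewrite !mxE.
by repeat case: ifP => _; rewrite ?derivE ?hornerE.
Qed.

(* [ddet A Y] is the derivative at 0 of [t |-> det (A + t Y)], see [tangent_SL2E]. *)
Definition ddet (R : comNzRingType) (A Y : 'M[R]_2) : R :=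
  A 0 0 * Y 1 1 + Y 0 0 * A 1 1 - A 0 1 * Y 1 0 - Y 0 1 * A 1 0.

Lemma ddetM (R : comNzRingType) (P X Q Y : 'M[R]_2) :
  ddet (P * X * Q) (P * Y * Q) = \det P * \det Q * ddet X Y.
Proof.
rewrite /ddet !det_mx2 !mxE !big_ord_recl !big_ord0 !mxE !big_ord_recl !big_ord0 /=.
have -> : lift ord0 ord0 = 1 :> 'I_2 by apply/val_inj.
have -> : ord0 = 0 :> 'I_2 by [].
ring.
Qed.

Lemma tangent_SL2E (C : fieldType) (A Y : 'M[C]_2) :
  tangent_SL2 A Y = (ddet A Y == 0).
Proof.
rewrite /tangent_SL2 det_mx2 !mxE !derivE !hornerE /ddet.
by congr (_ == 0); ring.
Qed.

Lemma tangent_Mj_span (C : fieldType) j (s : C) (U : 'M[C]_2) :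
  s != 0 -> ddet (Mj j.+1 s) U = 0 ->
  exists a b c, a *: (dMj C j * Mj j.+1 s) + b *: dMj C j.+1
                + c *: (Mj j.+1 s * dMj C j) = U.
Proof.
move=> s_neq0; rewrite /ddet !mxE /=.
case odd_j: (odd j) => /= tU.
- have U10 : U 1 0 = (U 1 1 + U 0 0) / s.
    apply: (mulIf s_neq0); rewrite divfK //; apply/eqP.
    by rewrite -subr_eq0 -oppr_eq0 -[X in _ == X]tU; apply/eqP; ring.
  exists (U 1 1 / s), (U 0 1), (U 0 0 / s).
  apply/matrixP => i k; case: (ord2P i) => ->; case: (ord2P k) => ->;
  by rewrite !mxE !big_ord_recl !big_ord0 !mxE /= odd_j /= ?U10; field.
- have U01 : U 0 1 = (U 1 1 + U 0 0) / s.
    apply: (mulIf s_neq0); rewrite divfK //; apply/eqP.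
    by rewrite -subr_eq0 -oppr_eq0 -[X in _ == X]tU; apply/eqP; ring.
  exists (U 0 0 / s), (U 1 0), (U 1 1 / s).
  apply/matrixP => i k; case: (ord2P i) => ->; case: (ord2P k) => ->;
  by rewrite !mxE !big_ord_recl !big_ord0 !mxE /= odd_j /= ?U01; field.
Qed.

Lemma prodr_nat_split (R : pzSemiRingType) (F : nat -> R) m i n :
  (m <= i < n)%N ->
  \prod_(m <= j < n) F j = (\prod_(m <= j < i) F j) * F i * \prod_(i.+1 <= j < n) F j.
Proof.
case/andP=> lemi ltin.
by rewrite (big_cat_nat lemi (ltnW ltin)) [\prod_(i <= j < n) _]big_ltn // -mulrA.
Qed.

Lemma big_nat1_scale_eq (R : pzRingType) (V : lmodType R) (T : nat -> V) (a : R) k m n :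
  (m <= k < n)%N -> \sum_(m <= i < n) (if i == k then a else 0) *: T i = a *: T k.
Proof.
move=> mkn; rewrite (eq_bigr (fun i => if i == k then a *: T i else 0)).
  by rewrite -big_mkcond big_nat1_eq mkn.
by move=> i _; case: eqP; rewrite ?scale0r.
Qed.

Section SubmersionPhiN.
Variables (C : fieldType) (N : nat).

(* The entries of [v] indexed by [nat], with junk value 0 beyond [N]. *)
Definition rowseq (v : 'rV[C]_N) (k : nat) : C :=
  if insub k is Some i then v 0 i else 0.

Lemma rowseq_ord (v : 'rV[C]_N) (i : 'I_N) : rowseq v i = v 0 i.
Proof. by rewrite /rowseq valK. Qed.

Lemma rowseq_row (w : nat -> C) k : (k < N)%N -> rowseq (\row_(i < N) w i) k = w k.
Proof. by move=> ltkN; rewrite /rowseq insubT mxE. Qed.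

Variable z : 'rV[C]_N.

Local Notation F j := (Mj j.+1 (rowseq z j)).

Definition partial_PhiN (i : nat) : 'M[C]_2 :=
  (\prod_(0 <= j < i) F j) * dMj C i.+1 * \prod_(i.+1 <= j < N) F j.

Lemma PhiN_rowseq : PhiN (fun i : 'I_N => z 0 i) = \prod_(0 <= j < N) F j.
Proof. by rewrite /PhiN big_mkord; apply: eq_bigr => i _; rewrite rowseq_ord. Qed.

Lemma dPhiN_rowseq v :
  dPhiN z v = \sum_(0 <= i < N) rowseq v i *: partial_PhiN i.
Proof.
rewrite /dPhiN /PhiN -/(mx_deriv0 _).
have -> : \prod_(i < N) Mj i.+1 ((z 0 i)%:P + v 0 i *: 'X) =
          \prod_(0 <= i < N) Mj i.+1 ((rowseq z i)%:P + rowseq v i *: 'X).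
  by rewrite big_mkord; apply: eq_bigr => i _; rewrite !rowseq_ord.
rewrite mx_deriv0_prod; apply: eq_bigr => i _.
rewrite mx_deriv0_Mj -scalerAr -scalerAl /partial_PhiN.
by congr (_ *: (_ * _ * _)); apply: eq_bigr => j _; rewrite mx_at0_Mj.
Qed.

Lemma dPhiN_row (w : nat -> C) :
  dPhiN z (\row_(i < N) w i) = \sum_(0 <= i < N) w i *: partial_PhiN i.
Proof. by rewrite dPhiN_rowseq; apply: eq_big_nat => i /andP[_ /rowseq_row ->]. Qed.

Lemma PhiN_submersion_at_mid k :
  (k.+2 < N)%N -> rowseq z k.+1 != 0 -> PhiN_submersion_at z.
Proof.
move=> ltkN zk1_neq0 Y; rewrite tangent_SL2E PhiN_rowseq => /eqP tY.
set L := \prod_(0 <= j < k.+1) F j; set R := \prod_(k.+2 <= j < N) F j.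
have PhiE : \prod_(0 <= j < N) F j = L * F k.+1 * R.
  by rewrite (@prodr_nat_split _ _ 0 k.+1 N) //; lia.
have unitL : L \is a GRing.unit := unit_prod_Mj _ 0 k.+1.
have unitR : R \is a GRing.unit := unit_prod_Mj _ k.+2 N.
set U := L^-1 * Y * R^-1.
have YE : Y = L * U * R by rewrite /U !mulrA mulrV // mul1r mulrVK.
rewrite PhiE YE ddetM !det_prod_Mj !mul1r in tY.
have [a [b [c abcE]]] := tangent_Mj_span zk1_neq0 tY.
pose w i := (if i == k then a else 0) + (if i == k.+1 then b else 0)
            + (if i == k.+2 then c else 0).
exists (\row_(i < N) w i).
rewrite dPhiN_row; under eq_bigr do rewrite !scalerDl.
rewrite !big_split /= !big_nat1_scale_eq; try lia.
have PE : L = (\prod_(0 <= j < k) F j) * F k by rewrite /L big_nat_recr.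
have RE : R = F k.+2 * \prod_(k.+3 <= j < N) F j by rewrite /R big_ltn.
have partialE : partial_PhiN k = L * (dMj C k.+1 * F k.+1) * R.
  rewrite /partial_PhiN PE [\prod_(k.+1 <= j < N) _]big_ltn; last by lia.
  by rewrite -/R -!mulrA (mulrA (F k)) Mj_dMj.
have partialSSE : partial_PhiN k.+2 = L * (F k.+1 * dMj C k.+1) * R.
  rewrite /partial_PhiN big_nat_recr //= -/L RE -!mulrA; congr (L * (F k.+1 * _)).
  by rewrite -(dMjSS C k.+1) mulrA dMj_Mj.
rewrite partialE partialSSE YE -abcE !(mulrDr, mulrDl).
by do ![rewrite -scalerAl | rewrite -scalerAr].
Qed.

Lemma not_PhiN_submersion_at_outer :
  (1 < N)%N -> (forall k, (0 < k < N.-1)%N -> rowseq z k = 0) ->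
  ~ PhiN_submersion_at z.
Proof.
move=> ltN1 z_mid submersion.
set L := Mj 1 (rowseq z 0); set R := Mj N.-1.+1 (rowseq z N.-1).
have prod_mid m n : (0 < m)%N -> (n <= N.-1)%N -> \prod_(m <= j < n) F j = 1.
  move=> m_gt0 leN; rewrite big_nat_cond big1 // => j /andP[/andP[? ?] _].
  by rewrite z_mid ?Mj0 //; lia.
have PhiE : \prod_(0 <= j < N) F j = L * 1 * R.
  rewrite (@prodr_nat_split _ _ 0 N.-1 N); last by lia.
  rewrite big_ltn; last by lia.
  by rewrite (prod_mid 1 N.-1) // big_geq ?mulr1 //; lia.
have prefixE i : (i < N)%N ->
    (\prod_(0 <= j < i) F j) * dMj C i.+1 = L * dMj C i.+1.
  case: i => [|i] ltiN; first by rewrite big_geq // mul1r Mj_dMj.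
  by rewrite big_ltn // prod_mid ?mulr1 //; lia.
have suffixE i : (i < N)%N ->
    dMj C i.+1 * (\prod_(i.+1 <= j < N) F j) = dMj C i.+1 * R.
  move=> ltiN; have [ltiN1|geiN1] := ltnP i N.-1.
    rewrite (@prodr_nat_split _ _ i.+1 N.-1 N); last by lia.
    by rewrite (prod_mid i.+1 N.-1) // big_geq ?mul1r ?mulr1 //; lia.
  have -> : i = N.-1 by lia.
  by rewrite big_geq ?dMj_Mj ?mulr1 //; lia.
have partialE i : (i < N)%N -> partial_PhiN i = L * dMj C i.+1 * R.
  by move=> ltiN; rewrite /partial_PhiN prefixE // -mulrA suffixE // mulrA.
have unconj X : Mj 1 (- rowseq z 0) * (L * X * R) * Mj N.-1.+1 (- rowseq z N.-1) = X.
  by rewrite !mulrA MjNK mul1r -mulrA MjKN mulr1.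
pose H : 'M[C]_2 := \matrix_(a < 2, b < 2) if a == b then (-1) ^+ a else 0.
have tangentH : tangent_SL2 (PhiN (fun i : 'I_N => z 0 i)) (L * H * R).
  rewrite tangent_SL2E PhiN_rowseq PhiE ddetM !det_Mj !mul1r /ddet !mxE /=.
  by apply/eqP; ring.
have [v dv] := submersion _ tangentH.
(* Once the outer factors are undone, every partial derivative has (0,0) entry 0, while H
   has (0,0) entry 1. *)
have := congr1 (fun M => (Mj 1 (- rowseq z 0) * M * Mj N.-1.+1 (- rowseq z N.-1)) 0 0) dv.
rewrite /= unconj dPhiN_rowseq mulr_sumr mulr_suml summxE big_nat_cond big1.
  by rewrite mxE /= => /eqP; rewrite eq_sym oner_eq0.
move=> i /andP[/andP[_ ltiN] _].
by rewrite partialE // -scalerAr -scalerAl unconj mxE dMj00 mulr0.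
Qed.

End SubmersionPhiN.

Theorem lemma1 (R : realType) (N : nat) (hN : (4 <= N)%N) (z : 'rV[Cplx R]_N) :
  PhiN_submersion_at z <->
  exists i : 'I_N, (2 <= i.+1 <= N.-1)%N /\ z 0 i != 0.
Proof.
split => [submersion | [i [mid_i zi_neq0]]].
- case: (boolP [exists i : 'I_N, (2 <= i.+1 <= N.-1)%N && (z 0 i != 0)]).
    by case/existsP => i /andP[mid_i zi_neq0]; exists i.
  move/existsPn => mid0; case: (not_PhiN_submersion_at_outer _ _ submersion).
    by lia.
  move=> k mid_k; have ltkN : (k < N)%N by lia.
  have := mid0 (Ordinal ltkN); rewrite -(rowseq_ord z (Ordinal ltkN)) /=.
  by rewrite negb_and negbK => /orP[/negP[]|/eqP //]; lia.
- apply: (PhiN_submersion_at_mid (k := i.-1)); first by lia.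
  by rewrite prednK ?rowseq_ord //; lia.
Qed.
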